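(* Finite pseudo-orthomodular posets are precisely the complement-closed and doubly dense subsets of finite orthomodular lattices. That is: (a) every finite pseudo-orthomodular poset is isomorphic (as a poset with complementation) to a complement-closed and doubly dense subset of some finite orthomodular lattice, with the induced order and complementation; and (b) if $X$ is a complement-closed and doubly dense subset of a finite orthomodular lattice, then $X$ with the induced order and complementation is a (finite) pseudo-orthomodular poset.
   Context: For a poset and $M$ a subset, $U(M)$, $L(M)$ denote the sets of upper and lower bounds; $U(a,b)=U(\{a,b\})$ etc. A poset with complementation is a bounded poset $(P,\le,{}',0,1)$ with antitone involution $'$ ($x\le y\Rightarrow y'\le x'$, $x''=x$) such that $L(x,x')=\{0\}$, $U(x,x')=\{1\}$; it is pseudo-orthomodular if $L(U(L(x,y),y'),y)=L(x,y)$ for all $x,y$. A lattice with complementation is orthomodular if $x\vee y=((x\vee y)\wedge y')\vee y$ for all $x,y$. For a poset with complementation $\mathbf Q=(Q,\le,{}',0,1)$, a subset $X\subseteq Q$ is complement-closed and doubly dense in $\mathbf Q$ if: for every $a\in Q$, $a=\bigvee_{\mathbf Q}(L(a)\cap X)=\bigwedge_{\mathbf Q}(U(a)\cap X)$; $x\in X$ implies $x'\in X$; and $0,1\in X$. *)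

From mathcomp Require Import all_boot.
Set Implicit Arguments. Unset Strict Implicit. Unset Printing Implicit Defensive.

Section Defs.
Variables (T : finType) (D : {set T}) (le : rel T).

Definition Ub (M : {set T}) : {set T} := [set x in D | [forall m in M, le m x]].
Definition Lb (M : {set T}) : {set T} := [set x in D | [forall m in M, le x m]].

Definition is_sup (M : {set T}) (a : T) : Prop :=
  a \in Ub M /\ forall u, u \in Ub M -> le a u.
Definition is_inf (M : {set T}) (a : T) : Prop :=
  a \in Lb M /\ forall u, u \in Lb M -> le u a.

Definition poset_compl (c : T -> T) (z o : T) : Prop :=
  [/\ {in D, forall x, le x x},
      {in D &, forall x y, le x y -> le y x -> x = y},
      {in D & &, forall x y w, le x y -> le y w -> le x w},
      (z \in D /\ o \in D /\ {in D, forall x, le z x && le x o}) &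
      [/\ {in D, forall x, c x \in D},
          {in D &, forall x y, le x y -> le (c y) (c x)},
          {in D, forall x, c (c x) = x},
          {in D, forall x, Lb [set x; c x] = [set z]} &
          {in D, forall x, Ub [set x; c x] = [set o]}]].

Definition pseudo_orthomodular (c : T -> T) (z o : T) : Prop :=
  poset_compl c z o /\
  {in D &, forall x y,
     Lb (Ub (Lb [set x; y] :|: [set c y]) :|: [set y]) = Lb [set x; y]}.

Definition is_lattice : Prop :=
  {in D &, forall x y, (exists j, is_sup [set x; y] j) /\ (exists m, is_inf [set x; y] m)}.

Definition orthomodular_lattice (c : T -> T) (z o : T) : Prop :=
  [/\ poset_compl c z o, is_lattice &
      {in D &, forall x y j m k,
         is_sup [set x; y] j -> is_inf [set j; c y] m -> is_sup [set m; y] k -> j = k}].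

Definition cc_doubly_dense (c : T -> T) (z o : T) (X : {set T}) : Prop :=
  [/\ X \subset D,
      {in D, forall a, (is_sup (Lb [set a] :&: X) a /\ is_inf (Ub [set a] :&: X) a)},
      {in X, forall x, c x \in X} &
      (z \in X /\ o \in X)].
End Defs.

From mathcomp Require Import all_boot.
Set Implicit Arguments. Unset Strict Implicit. Unset Printing Implicit Defensive.

(* (a) Take the Dedekind-MacNeille completion: the cuts A = L(U(A)) of P, ordered by
   inclusion, with A' = L(c[A]); x |-> L(x) embeds P into it join- and meet-densely.
   Pseudo-orthomodularity says that every principal cut y satisfies y /\ (y' \/ C) = C
   for principal C <= y, hence for all cuts C <= y, each cut being an intersection of
   principal ones.  A finite ortholattice in which every element other than 1 lies below
   such an element other than 1 is orthomodular: if x <= y <= q with q of this kind and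
   x' /\ y = 0, either y = q, and then x = q, or q' \/ y lies below such an s and q /\ s
   is again of this kind, strictly between y and q; by finiteness x = y, which yields the
   orthomodular law.
   (b) In an orthomodular lattice m <= y implies (m \/ y') /\ y = m.  By double density the
   bounds inside X of the sets occurring in the pseudo-orthomodular identity are those of
   x /\ y, (x /\ y) \/ y' and ((x /\ y) \/ y') /\ y, so the identity reduces to this
   instance of orthomodularity. *)

Section Bounds.
Variables (T : finType) (le : rel T).
Implicit Types (D X M N : {set T}) (p : pred T).

Lemma forall_in_set1 p a : [forall m in [set a], p m] = p a.
Proof. by apply/forall_inP/idP => [->|pa m /set1P ->]; rewrite ?set11. Qed.

Lemma forall_in_setU p M N :
  [forall m in M :|: N, p m] = [forall m in M, p m] && [forall m in N, p m].
Proof.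
apply/forall_inP/andP => [pMN | [/forall_inP pM /forall_inP pN] m].
  by split; apply/forall_inP => m mM; apply: pMN; rewrite inE mM ?orbT.
by case/setUP; [apply: pM | apply: pN].
Qed.

Lemma in_Lb1 D a x : (x \in Lb D le [set a]) = (x \in D) && le x a.
Proof. by rewrite inE forall_in_set1. Qed.

Lemma in_Ub1 D a x : (x \in Ub D le [set a]) = (x \in D) && le a x.
Proof. by rewrite inE forall_in_set1. Qed.

Lemma in_Lb2 D a b x : (x \in Lb D le [set a; b]) = [&& x \in D, le x a & le x b].
Proof. by rewrite inE forall_in_setU !forall_in_set1. Qed.

Lemma in_Ub2 D a b x : (x \in Ub D le [set a; b]) = [&& x \in D, le a x & le b x].
Proof. by rewrite inE forall_in_setU !forall_in_set1. Qed.

Lemma Lb_setU D M N : Lb D le (M :|: N) = Lb D le M :&: Lb D le N.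
Proof. by apply/setP => x; rewrite !inE forall_in_setU; case: (x \in D). Qed.

Lemma Ub_setU D M N : Ub D le (M :|: N) = Ub D le M :&: Ub D le N.
Proof. by apply/setP => x; rewrite !inE forall_in_setU; case: (x \in D). Qed.

Lemma Lb_subset D X M : X \subset D -> Lb X le M = X :&: Lb D le M.
Proof.
by move=> /subsetP sXD; apply/setP => x; rewrite !inE; case xX: (x \in X); rewrite //= sXD.
Qed.

Lemma Ub_subset D X M : X \subset D -> Ub X le M = X :&: Ub D le M.
Proof.
by move=> /subsetP sXD; apply/setP => x; rewrite !inE; case xX: (x \in X); rewrite //= sXD.
Qed.

Lemma is_sup2P a b j : is_sup [set: T] le [set a; b] j <->
  [/\ le a j, le b j & forall u, le a u -> le b u -> le j u].
Proof.
rewrite /is_sup in_Ub2 in_setT /=.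
split => [[/andP[aj bj] jl] | [aj bj jl]].
  by split=> // u au bu; apply: jl; rewrite in_Ub2 in_setT au bu.
by rewrite aj bj; split=> // u; rewrite in_Ub2 in_setT /= => /andP[]; apply: jl.
Qed.

Lemma is_inf2P a b m : is_inf [set: T] le [set a; b] m <->
  [/\ le m a, le m b & forall u, le u a -> le u b -> le u m].
Proof.
rewrite /is_inf in_Lb2 in_setT /=.
split => [[/andP[ma mb] mg] | [ma mb mg]].
  by split=> // u ua ub; apply: mg; rewrite in_Lb2 in_setT ua ub.
by rewrite ma mb; split=> // u; rewrite in_Lb2 in_setT /= => /andP[]; apply: mg.
Qed.

End Bounds.

Module Ortholattice.
Section Theory.
Variables (T : finType) (le : rel T) (meet join : T -> T -> T) (compl : T -> T) (z o : T).
Hypotheses (le_refl : forall x, le x x)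
           (le_anti : forall x y, le x y -> le y x -> x = y)
           (le_trans : forall x y w, le x y -> le y w -> le x w)
           (leIl : forall x y, le (meet x y) x) (leIr : forall x y, le (meet x y) y)
           (lexI : forall w x y, le w x -> le w y -> le w (meet x y))
           (leUl : forall x y, le x (join x y)) (leUr : forall x y, le y (join x y))
           (leUx : forall x y w, le x w -> le y w -> le (join x y) w)
           (le0x : forall x, le z x) (lex1 : forall x, le x o)
           (compl_anti : forall x y, le x y -> le (compl y) (compl x))
           (complK : involutive compl)
           (meet_compl_le0 : forall x, le (meet x (compl x)) z).

Lemma le_compl x y : le (compl x) (compl y) = le y x.
Proof.
apply/idP/idP => [|/compl_anti //].
by rewrite -{2}(complK x) -{2}(complK y); apply: compl_anti.
Qed.

Lemma meetC x y : meet x y = meet y x.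
Proof. by apply: le_anti; apply: lexI. Qed.

Lemma joinC x y : join x y = join y x.
Proof. by apply: le_anti; apply: leUx. Qed.

Lemma meetA x y w : meet x (meet y w) = meet (meet x y) w.
Proof.
apply: le_anti; apply: lexI; try apply: lexI;
  by [| exact: le_trans (leIr _ _) (leIl _ _) | exact: le_trans (leIr _ _) (leIr _ _)
      | exact: le_trans (leIl _ _) (leIl _ _) | exact: le_trans (leIl _ _) (leIr _ _)].
Qed.

Lemma joinA x y w : join x (join y w) = join (join x y) w.
Proof.
apply: le_anti; apply: leUx; try apply: leUx;
  by [| exact: le_trans (leUl _ _) (leUl _ _) | exact: le_trans (leUr _ _) (leUl _ _)
      | exact: le_trans (leUl _ _) (leUr _ _) | exact: le_trans (leUr _ _) (leUr _ _)].
Qed.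

Lemma meet_l x y : le x y -> meet x y = x.
Proof. by move=> xy; apply: le_anti (lexI _ _) . Qed.

Lemma join_r x y : le x y -> join x y = y.
Proof. by move=> xy; apply: le_anti (leUx _ _) _. Qed.

Lemma compl_join x y : compl (join x y) = meet (compl x) (compl y).
Proof.
apply: le_anti; first by apply: lexI; apply: compl_anti.
by rewrite -[meet _ _]complK le_compl; apply: leUx; rewrite -le_compl complK.
Qed.

Lemma compl_meet x y : compl (meet x y) = join (compl x) (compl y).
Proof. by rewrite -{1}(complK x) -{1}(complK y) -compl_join complK. Qed.

Lemma meet_compl x : meet x (compl x) = z.
Proof. exact: le_anti. Qed.

Lemma compl0 : compl z = o.
Proof. by apply: le_anti => //; rewrite -le_compl complK. Qed.

Lemma compl1 : compl o = z.
Proof. by rewrite -compl0 complK. Qed.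

Lemma join_compl x : join x (compl x) = o.
Proof. by rewrite -{1}(complK x) -compl_meet meetC meet_compl compl0. Qed.

Definition orthomodular_below r := forall x, le x r -> meet r (join (compl r) x) = x.

Lemma orthomodular_below1 : orthomodular_below o.
Proof. by move=> x _; rewrite compl1 join_r // meetC meet_l. Qed.

Section Codense.
Hypothesis codense :
  forall x, x != o -> exists s, [/\ le x s, s != o & orthomodular_below s].

Lemma meet_compl0_eq q x y : orthomodular_below q ->
  le x y -> le y q -> meet (compl x) y = z -> x = y.
Proof.
move=> + xy; have [n] := ubnP #|[pred w | le w q]|.
elim: n q => // n IH q size_q omq yq xy0.
case: (eqVneq y q) => [eyq | nyq].
  subst q.
  rewrite -(omq x xy) -[join _ _]complK compl_join complK (meetC y (compl x)).
  by rewrite xy0 compl0 (meet_l (lex1 y)).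
have [s [qys so oms]] : exists s, [/\ le (join (compl q) y) s, s != o & orthomodular_below s].
  apply: codense; apply: contra_neq nyq => qy1.
  by rewrite -(omq y yq) qy1 (meet_l (lex1 q)).
have cqs : le (compl q) s by exact: le_trans (leUl _ _) qys.
have ys : le y s by exact: le_trans (leUr _ _) qys.
have nqs : ~~ le q s.
  by apply: contra so => qs; apply/eqP/le_anti; rewrite // -(join_compl q); apply: leUx.
apply: (IH (meet q s)) => //; last exact: lexI.
- rewrite -ltnS; apply: leq_trans size_q; rewrite ltnS; apply: proper_card.
  apply/properP; split; first by apply/subsetP => w; rewrite !inE => /le_trans; apply.
  by exists q; rewrite !inE ?le_refl //; apply: contra nqs => /le_trans; apply.
- move=> w wqs; rewrite compl_meet -meetA (joinC (compl q)) -joinA oms ?omq //.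
    exact: le_trans wqs (leIl _ _).
  by apply: leUx => //; exact: le_trans wqs (leIr _ _).
Qed.

Lemma orthomodular_law x y : join (meet (join x y) (compl y)) y = join x y.
Proof.
set j := join x y; set k := join (meet j (compl y)) y.
have kj : le k j by apply: leUx; [exact: leIl | exact: leUr].
apply: (meet_compl0_eq orthomodular_below1 kj (lex1 j)).
apply: le_anti (le0x _) ; apply: le_trans (meet_compl_le0 k).
apply: lexI; last exact: leIl.
apply: le_trans (leUl _ y); apply: lexI; first exact: leIr.
exact: le_trans (leIl _ _) (compl_anti (leUr _ _)).
Qed.

End Codense.

Lemma poset_compl_ortholattice : poset_compl [set: T] le compl z o.
Proof.
split.
- by move=> x _.
- by move=> x y _ _; apply: le_anti.
- by move=> x y w _ _ _; apply: le_trans.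
- by rewrite in_setT; split=> //; split=> // x _; rewrite le0x lex1.
split.
- by move=> x _; rewrite in_setT.
- by move=> x y _ _; apply: compl_anti.
- by move=> x _.
- move=> x _; apply/setP => w; rewrite in_Lb2 in_setT inE /=.
  apply/andP/eqP => [[wx wc] | ->]; last by rewrite !le0x.
  by apply: le_anti => //; rewrite -(meet_compl x); apply: lexI.
- move=> x _; apply/setP => w; rewrite in_Ub2 in_setT inE /=.
  apply/andP/eqP => [[xw cw] | ->]; last by rewrite !lex1.
  by apply: le_anti => //; rewrite -(join_compl x); apply: leUx.
Qed.

Lemma orthomodular_lattice_of_law :
  (forall x y, join (meet (join x y) (compl y)) y = join x y) ->
  orthomodular_lattice [set: T] le compl z o.
Proof.
move=> om; have sup_eq x y j : is_sup [set: T] le [set x; y] j -> j = join x y.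
  by case/is_sup2P => xj yj jl; apply: le_anti (jl _ _ _) (leUx _ _).
have inf_eq x y m : is_inf [set: T] le [set x; y] m -> m = meet x y.
  by case/is_inf2P => mx my mg; apply: le_anti (lexI _ _) (mg _ _ _).
split; first exact: poset_compl_ortholattice.
- move=> x y _ _; split; first by exists (join x y); apply/is_sup2P; split=> //; apply: leUx.
  by exists (meet x y); apply/is_inf2P; split=> // u; apply: lexI.
- move=> x y _ _ j m k /sup_eq -> /inf_eq -> /sup_eq ->; exact/esym/om.
Qed.

Lemma orthomodular_lattice_of_codense :
  (forall x, x != o -> exists s, [/\ le x s, s != o & orthomodular_below s]) ->
  orthomodular_lattice [set: T] le compl z o.
Proof. by move=> codense; apply: orthomodular_lattice_of_law; apply: orthomodular_law. Qed.

End Theory.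
End Ortholattice.

Section PosetWithComplementation.
Variables (T : finType) (le : rel T) (c : T -> T) (z o : T).
Hypothesis compl_poset : poset_compl [set: T] le c z o.

Local Notation L := (Lb [set: T] le).
Local Notation U := (Ub [set: T] le).
Implicit Types (M N S : {set T}).

Lemma le_refl x : le x x.
Proof. by case: compl_poset => + _ _ _ _; apply; rewrite in_setT. Qed.

Lemma le_anti x y : le x y -> le y x -> x = y.
Proof. by case: compl_poset => _ + _ _ _; apply; rewrite in_setT. Qed.

Lemma le_trans x y w : le x y -> le y w -> le x w.
Proof. by case: compl_poset => _ _ + _ _; apply; rewrite in_setT. Qed.

Lemma le0x x : le z x.
Proof. by case: compl_poset => _ _ _ [_ [_ /(_ x (in_setT x))/andP[]]]. Qed.

Lemma lex1 x : le x o.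
Proof. by case: compl_poset => _ _ _ [_ [_ /(_ x (in_setT x))/andP[]]]. Qed.

Lemma compl_anti x y : le x y -> le (c y) (c x).
Proof. by case: compl_poset => _ _ _ _ [_ + _ _ _]; apply; rewrite in_setT. Qed.

Lemma complK : involutive c.
Proof. by case: compl_poset => _ _ _ _ [_ _ + _ _] x; apply; rewrite in_setT. Qed.

Lemma Lb_compl x : L [set x; c x] = [set z].
Proof. by case: compl_poset => _ _ _ _ [_ _ _ + _]; apply; rewrite in_setT. Qed.

Lemma Ub_compl x : U [set x; c x] = [set o].
Proof. by case: compl_poset => _ _ _ _ [_ _ _ _]; apply; rewrite in_setT. Qed.

Lemma le_compl x y : le (c x) (c y) = le y x.
Proof.
apply/idP/idP => [|/compl_anti //].
by rewrite -{2}(complK x) -{2}(complK y); apply: compl_anti.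
Qed.

Lemma inL M x : (x \in L M) = [forall m in M, le x m].
Proof. by rewrite inE in_setT. Qed.

Lemma inU M x : (x \in U M) = [forall m in M, le m x].
Proof. by rewrite inE in_setT. Qed.

Lemma inL1 a x : (x \in L [set a]) = le x a.
Proof. by rewrite in_Lb1 in_setT. Qed.

Lemma inU1 a x : (x \in U [set a]) = le a x.
Proof. by rewrite in_Ub1 in_setT. Qed.

Lemma sup_compl a b m :
  is_inf [set: T] le [set a; b] m -> is_sup [set: T] le [set c a; c b] (c m).
Proof.
case/is_inf2P => ma mb mg; apply/is_sup2P; split; rewrite ?le_compl // => u au bu.
by rewrite -[u]complK le_compl mg // -le_compl complK.
Qed.

Lemma inf_compl a b j :
  is_sup [set: T] le [set a; b] j -> is_inf [set: T] le [set c a; c b] (c j).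
Proof.
case/is_sup2P => aj bj jl; apply/is_inf2P; split; rewrite ?le_compl // => u ua ub.
by rewrite -[u]complK le_compl jl // -le_compl complK.
Qed.

Lemma Lb_anti M N : M \subset N -> L N \subset L M.
Proof.
move=> /subsetP MN; apply/subsetP => x; rewrite !inL => /forall_inP xN.
by apply/forall_inP => m /MN; apply: xN.
Qed.

Lemma Ub_anti M N : M \subset N -> U N \subset U M.
Proof.
move=> /subsetP MN; apply/subsetP => x; rewrite !inU => /forall_inP xN.
by apply/forall_inP => m /MN; apply: xN.
Qed.

Lemma LU_subset M N : M \subset N -> L (U M) \subset L (U N).
Proof. by move=> MN; apply/Lb_anti/Ub_anti. Qed.

Lemma sub_LU M : M \subset L (U M).
Proof.
by apply/subsetP => x xM; rewrite inL; apply/forall_inP => u; rewrite inU => /forall_inP; apply.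
Qed.

Lemma sub_UL M : M \subset U (L M).
Proof.
by apply/subsetP => x xM; rewrite inU; apply/forall_inP => u; rewrite inL => /forall_inP; apply.
Qed.

Lemma LUL M : L (U (L M)) = L M.
Proof. by apply/eqP; rewrite eqEsubset sub_LU andbT Lb_anti ?sub_UL. Qed.

Lemma Lb_le M x y : le y x -> x \in L M -> y \in L M.
Proof.
by move=> yx; rewrite !inL => /forall_inP xM; apply/forall_inP => m /xM; apply: le_trans.
Qed.

Lemma UL1 a : U (L [set a]) = U [set a].
Proof.
apply/setP => x; rewrite inU1 inU.
apply/forall_inP/idP => [|ax m]; first by apply; rewrite inL1 le_refl.
by rewrite inL1 => /le_trans; apply.
Qed.

Lemma L_compl S x : (x \in L (c @: S)) = (c x \in U S).
Proof.
rewrite inL inU; apply/forall_inP/forall_inP => [xcS m mS | cxS _ /imsetP[m mS ->]].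
  by rewrite -le_compl complK xcS ?imset_f.
by rewrite -le_compl complK cxS.
Qed.

Lemma compl_L_compl S : c @: L (c @: S) = U S.
Proof.
apply/setP => x; apply/imsetP/idP => [[y yS ->] | xS]; first by rewrite -L_compl.
by exists (c x); rewrite ?complK // L_compl complK.
Qed.

Section Completion.
Hypothesis pseudo_om : {in [set: T] &, forall x y,
  L (U (L [set x; y] :|: [set c y]) :|: [set y]) = L [set x; y]}.

Definition lu_closed (A : {set T}) := L (U A) == A.
Definition cut := {A : {set T} | lu_closed A}.
Implicit Types (A B C W : cut).
Definition lcut S : cut := exist _ (L S) (introT eqP (LUL S)).

Definition cut_le : rel cut := fun A B => val A \subset val B.
Definition cut_meet A B := lcut (U (val A) :|: U (val B)).
Definition cut_join A B := lcut (U (val A :|: val B)).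
Definition cut_compl A := lcut (c @: val A).
Definition cut0 := lcut setT.
Definition cut1 := lcut set0.
Definition principal x := lcut [set x].

Lemma cutK (A : cut) : L (U (val A)) = val A.
Proof. exact/eqP/(valP A). Qed.

Lemma val_cut_meet A B : val (cut_meet A B) = val A :&: val B.
Proof. by rewrite /= Lb_setU !cutK. Qed.

Lemma val_cut1 : val cut1 = setT.
Proof. by apply/setP => x; rewrite inL in_setT; apply/forall_inP => m; rewrite inE. Qed.

Lemma cut_le_refl A : cut_le A A. Proof. exact: subxx. Qed.

Lemma cut_le_anti A B : cut_le A B -> cut_le B A -> A = B.
Proof. by move=> AB BA; apply/val_inj/eqP; rewrite eqEsubset; apply/andP. Qed.

Lemma cut_le_trans A B C : cut_le A B -> cut_le B C -> cut_le A C.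
Proof. exact: subset_trans. Qed.

Lemma cut_leIl A B : cut_le (cut_meet A B) A.
Proof. by rewrite /cut_le val_cut_meet subsetIl. Qed.

Lemma cut_leIr A B : cut_le (cut_meet A B) B.
Proof. by rewrite /cut_le val_cut_meet subsetIr. Qed.

Lemma cut_lexI W A B : cut_le W A -> cut_le W B -> cut_le W (cut_meet A B).
Proof. by rewrite /cut_le val_cut_meet subsetI => -> ->. Qed.

Lemma cut_leUl A B : cut_le A (cut_join A B).
Proof. exact: subset_trans (subsetUl _ _) (sub_LU _). Qed.

Lemma cut_leUr A B : cut_le B (cut_join A B).
Proof. exact: subset_trans (subsetUr _ _) (sub_LU _). Qed.

Lemma cut_leUx A B W : cut_le A W -> cut_le B W -> cut_le (cut_join A B) W.
Proof. by move=> AW BW; rewrite /cut_le -[val W]cutK LU_subset // subUset; apply/andP. Qed.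

Lemma cut_le0x A : cut_le cut0 A.
Proof. by rewrite /cut_le -[val A]cutK Lb_anti ?subsetT. Qed.

Lemma cut_lex1 A : cut_le A cut1.
Proof. by rewrite /cut_le val_cut1 subsetT. Qed.

Lemma cut_compl_anti A B : cut_le A B -> cut_le (cut_compl B) (cut_compl A).
Proof. by move=> AB; apply/Lb_anti/imsetS. Qed.

Lemma cut_complK : involutive cut_compl.
Proof. by move=> A; apply: val_inj; rewrite /= compl_L_compl cutK. Qed.

Lemma cut_meet_compl_le0 A : cut_le (cut_meet A (cut_compl A)) cut0.
Proof.
apply/subsetP => x; rewrite val_cut_meet => /setIP[xA xcA].
have : x \in L [set x; c x].
  by rewrite in_Lb2 in_setT le_refl; move: xcA; rewrite inL => /forall_inP; apply; rewrite imset_f.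
by rewrite Lb_compl => /set1P ->; rewrite inL; apply/forall_inP => m _; apply: le0x.
Qed.

Lemma principal_le_cut x A : cut_le (principal x) A = (x \in val A).
Proof.
apply/idP/idP => [/subsetP xA | xA]; first by apply: xA; rewrite inL1 le_refl.
by apply/subsetP => y; rewrite inL1 -cutK => yx; apply: (Lb_le yx); rewrite cutK.
Qed.

Lemma cut_le_principal A b : cut_le A (principal b) = (b \in U (val A)).
Proof.
rewrite inU; apply/subsetP/forall_inP => [Ab a /Ab | Ab a /Ab]; by rewrite inL1.
Qed.

Lemma principal_le x y : cut_le (principal x) (principal y) = le x y.
Proof. by rewrite principal_le_cut /= inL1. Qed.

Lemma principal_inj : injective principal.
Proof. by move=> x y exy; apply: le_anti; rewrite -principal_le exy cut_le_refl. Qed.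

Lemma principal0 : principal z = cut0.
Proof.
apply: cut_le_anti; last exact: cut_le0x.
by rewrite principal_le_cut inL; apply/forall_inP => m _; apply: le0x.
Qed.

Lemma principal1 : principal o = cut1.
Proof.
apply: cut_le_anti; first exact: cut_lex1.
by rewrite cut_le_principal inU; apply/forall_inP => m _; apply: lex1.
Qed.

Lemma compl_principal y : cut_compl (principal y) = principal (c y).
Proof.
apply: val_inj; apply/setP => x.
by rewrite /= L_compl UL1 inU1 inL1 -le_compl complK.
Qed.

Lemma pseudo_om_closure x y :
  L [set y] :&: L (U (L [set c y] :|: L [set x; y])) = L [set x; y].
Proof.
have := pseudo_om (in_setT x) (in_setT y).
rewrite Lb_setU Ub_setU -(UL1 (c y)) -Ub_setU.
by rewrite setIC setUC.
Qed.

Lemma principal_orthomodular_below y :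
  Ortholattice.orthomodular_below cut_le cut_meet cut_join cut_compl (principal y).
Proof.
move=> C; rewrite /cut_le /= => Cy; apply: val_inj; rewrite val_cut_meet compl_principal /=.
have C_closure : val C \subset L (U (L [set c y] :|: val C)).
  exact: subset_trans (subsetUr _ _) (sub_LU _).
apply/eqP; rewrite eqEsubset subsetI Cy C_closure !andbT.
apply/subsetP => t /setIP[ty t_closure]; rewrite -cutK inL; apply/forall_inP => b bC.
have Cby : val C \subset L [set b; y].
  apply/subsetP => w wC; rewrite in_Lb2 in_setT -[le w y]inL1 (subsetP Cy _ wC) andbT /=.
  by move: bC; rewrite inU => /forall_inP; apply.
have : t \in L [set b; y].
  by rewrite -pseudo_om_closure inE ty; apply: (subsetP (LU_subset (setUS _ Cby))).
by rewrite in_Lb2 => /and3P[].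
Qed.

Lemma cut_codense A : A != cut1 -> exists B, [/\ cut_le A B, B != cut1 &
  Ortholattice.orthomodular_below cut_le cut_meet cut_join cut_compl B].
Proof.
move=> A1; have /subsetPn[x _ xA] : ~~ ([set: T] \subset val A).
  apply: contra A1 => TA; apply/eqP/val_inj; apply/eqP.
  by rewrite val_cut1 eqEsubset subsetT.
move: xA; rewrite -cutK inL negb_forall_in => /exists_inP[b bA xb].
exists (principal b); split; first by rewrite cut_le_principal.
  apply: contra xb => /eqP b1.
  by have := in_setT x; rewrite -val_cut1 -b1 /= inL1.
exact: principal_orthomodular_below.
Qed.

Lemma cut_orthomodular : orthomodular_lattice [set: cut] cut_le cut_compl cut0 cut1.
Proof.
apply: (Ortholattice.orthomodular_lattice_of_codense cut_le_refl cut_le_anti cut_le_trans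
  cut_leIl cut_leIr cut_lexI cut_leUl cut_leUr cut_leUx cut_le0x cut_lex1
  cut_compl_anti cut_complK cut_meet_compl_le0 cut_codense).
Qed.

Lemma principal_doubly_dense :
  cc_doubly_dense [set: cut] cut_le cut_compl cut0 cut1 (principal @: setT).
Proof.
split; first exact: subsetT.
- move=> A _; split; split.
  + rewrite inE in_setT; apply/forall_inP => B.
    by rewrite inE in_Lb1 => /andP[/andP[_ BA] _].
  + move=> W; rewrite inE => /andP[_ /forall_inP Wub]; apply/subsetP => x xA.
    rewrite -principal_le_cut Wub // inE in_Lb1 in_setT principal_le_cut xA.
    by rewrite imset_f.
  + rewrite inE in_setT; apply/forall_inP => B.
    by rewrite inE in_Ub1 => /andP[/andP[_ AB] _].
  + move=> W; rewrite inE => /andP[_ /forall_inP Wlb]; apply/subsetP => x xW.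
    rewrite -cutK inL; apply/forall_inP => b bA.
    have /subsetP Wb : cut_le W (principal b).
      by apply: Wlb; rewrite inE in_Ub1 in_setT cut_le_principal bA imset_f.
    by rewrite -inL1 Wb.
- by move=> _ /imsetP[x _ ->]; rewrite compl_principal imset_f.
- by rewrite -principal0 -principal1 !imset_f.
Qed.

Lemma completion_representation :
  exists (Q : finType) (leQ : rel Q) (cQ : Q -> Q) (zQ oQ : Q)
         (X : {set Q}) (f : T -> Q),
    [/\ orthomodular_lattice [set: Q] leQ cQ zQ oQ,
        cc_doubly_dense [set: Q] leQ cQ zQ oQ X,
        (injective f /\ f @: [set: T] = X),
        (forall x y, leQ (f x) (f y) = le x y) &
        (forall x, f (c x) = cQ (f x))].
Proof.
exists cut, cut_le, cut_compl, cut0, cut1, (principal @: setT), principal; split.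
- exact: cut_orthomodular.
- exact: principal_doubly_dense.
- by split; first exact: principal_inj.
- exact: principal_le.
- by move=> x; rewrite compl_principal.
Qed.

End Completion.

Section Subposet.
Variable X : {set T}.

Lemma poset_compl_restrict :
  {in X, forall x, c x \in X} -> z \in X -> o \in X -> poset_compl X le c z o.
Proof.
move=> cX zX oX; have sX := subsetT X.
split.
- by move=> x _; apply: le_refl.
- by move=> x y _ _; apply: le_anti.
- by move=> x y w _ _ _; apply: le_trans.
- by split=> //; split=> // x _; rewrite le0x lex1.
- split=> //.
  + by move=> x y _ _; apply: compl_anti.
  + by move=> x _; apply: complK.
  + by move=> x _; rewrite (Lb_subset _ _ sX) Lb_compl; apply/setIidPr; rewrite sub1set.
  + by move=> x _; rewrite (Ub_subset _ _ sX) Ub_compl; apply/setIidPr; rewrite sub1set.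
Qed.

Lemma LbX_inf a b m :
  is_inf [set: T] le [set a; b] m -> Lb X le [set a; b] = Lb X le [set m].
Proof.
case/is_inf2P => ma mb mg; apply/setP => x; rewrite in_Lb2 in_Lb1.
case: (x \in X) => //=; apply/andP/idP => [[xa xb] | xm]; first exact: mg.
by split; apply: le_trans xm _.
Qed.

Lemma UbX_sup a b j :
  is_sup [set: T] le [set a; b] j -> Ub X le [set a; b] = Ub X le [set j].
Proof.
case/is_sup2P => aj bj jl; apply/setP => x; rewrite in_Ub2 in_Ub1.
case: (x \in X) => //=; apply/andP/idP => [[ax bx] | jx]; first exact: jl.
by split; apply: le_trans jx.
Qed.

Lemma UbX_Lb1 a :
  is_sup [set: T] le (L [set a] :&: X) a -> Ub X le (Lb X le [set a]) = Ub X le [set a].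
Proof.
case=> _ a_least; apply/setP => u; rewrite in_Ub1 inE.
case: (u \in X) => //=; apply/forall_inP/idP => [ub | au m]; last first.
  by rewrite in_Lb1 => /andP[_ /le_trans]; apply.
apply: a_least; rewrite inU; apply/forall_inP => m; rewrite inE inL1 => /andP[ma mX].
by apply: ub; rewrite in_Lb1 mX.
Qed.

Lemma LbX_Ub1 a :
  is_inf [set: T] le (U [set a] :&: X) a -> Lb X le (Ub X le [set a]) = Lb X le [set a].
Proof.
case=> _ a_greatest; apply/setP => u; rewrite in_Lb1 inE.
case: (u \in X) => //=; apply/forall_inP/idP => [lb | ua m]; last first.
  by rewrite in_Ub1 => /andP[_]; apply: le_trans.
apply: a_greatest; rewrite inL; apply/forall_inP => m; rewrite inE inU1 => /andP[am mX].
by apply: lb; rewrite in_Ub1 mX.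
Qed.

End Subposet.

Section DoublyDense.
Hypotheses (lattice : is_lattice [set: T] le)
  (om : {in [set: T] &, forall x y j m k, is_sup [set: T] le [set x; y] j ->
          is_inf [set: T] le [set j; c y] m -> is_sup [set: T] le [set m; y] k -> j = k}).

Lemma orthomodular_dual m y w v : le m y -> is_sup [set: T] le [set m; c y] w ->
  is_inf [set: T] le [set w; y] v -> v = m.
Proof.
move=> my mcy_w wy_v.
have cm_sup : is_sup [set: T] le [set c m; c y] (c m).
  by apply/is_sup2P; split; rewrite ?le_refl ?le_compl.
have := om (in_setT (c m)) (in_setT (c y)) cm_sup (inf_compl mcy_w) (sup_compl wy_v).
by move/(congr1 c); rewrite !complK.
Qed.

Lemma pseudo_orthomodular_doubly_dense X :
  cc_doubly_dense [set: T] le c z o X -> pseudo_orthomodular X le c z o.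
Proof.
case=> _ dense cX [zX oX]; split; first exact: poset_compl_restrict.
move=> x y _ _.
have [_ [m xy_m]] := lattice (in_setT x) (in_setT y).
have [[w mcy_w] _] := lattice (in_setT m) (in_setT (c y)).
have [_ [v wy_v]] := lattice (in_setT w) (in_setT y).
have my : le m y by case/is_inf2P: xy_m.
have [[m_sup _] [_ w_inf]] := (dense m (in_setT m), dense w (in_setT w)).
rewrite (LbX_inf X xy_m) Ub_setU (UbX_Lb1 m_sup) -Ub_setU (UbX_sup X mcy_w).
by rewrite Lb_setU (LbX_Ub1 w_inf) -Lb_setU (LbX_inf X wy_v) (orthomodular_dual my mcy_w wy_v).
Qed.

End DoublyDense.

End PosetWithComplementation.

Theorem theorem8 :
  (* (a) representation *)
  (forall (P : finType) (le : rel P) (c : P -> P) (z o : P),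
     pseudo_orthomodular [set: P] le c z o ->
     exists (Q : finType) (leQ : rel Q) (cQ : Q -> Q) (zQ oQ : Q)
            (X : {set Q}) (f : P -> Q),
       [/\ orthomodular_lattice [set: Q] leQ cQ zQ oQ,
           cc_doubly_dense [set: Q] leQ cQ zQ oQ X,
           (injective f /\ f @: [set: P] = X),
           (forall x y, leQ (f x) (f y) = le x y) &
           (forall x, f (c x) = cQ (f x))]) /\
  (* (b) induced structure on X is a pseudo-orthomodular poset *)
  (forall (Q : finType) (leQ : rel Q) (cQ : Q -> Q) (zQ oQ : Q) (X : {set Q}),
     orthomodular_lattice [set: Q] leQ cQ zQ oQ ->
     cc_doubly_dense [set: Q] leQ cQ zQ oQ X ->
     pseudo_orthomodular X leQ cQ zQ oQ).
Proof.
split.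
  move=> P le c z o [compl_poset pseudo_om].
  exact: completion_representation compl_poset pseudo_om.
by move=> Q le c z o X [compl_poset lattice om]; exact: pseudo_orthomodular_doubly_dense.
Qed.
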